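(* Let $\mathcal{C}$ be a component of class $i$ (at an upper layer $l$) which has $\Omega(k)$ pairwise internally vertex-disjoint long connector paths. Then for every maximal matching $M$ in $\mathcal{H}_i$, the edges $\{v_{\mathcal{C}},w_{\mathcal{C}}\}$ of $M$ lying in $\mathcal{H}_i[\mathcal{C}]$ correspond (via their vertices $v,w$) to $\Omega(k)$ pairwise internally vertex-disjoint long connector paths for $\mathcal{C}$.
   Context: $G=(V,E)$ is a finite undirected graph with vertex connectivity $k$. Fix an integer $L$. The virtual graph $\mathcal{G}$ contains $3L$ copies of each $v\in V$: each lower layer $1,\dots,L$ contains one copy of every node; each upper layer $L+1,\dots,2L$ contains a type-1 copy and a type-2 copy of every node. Every copy of $v$ is adjacent to all other copies of $v$ and to all copies of each neighbor of $v$ in $G$. $\Psi$ maps virtual nodes to real nodes. There are classes $1,\dots,t$. For a fixed upper layer $l$, nodes of layers $1,\dots,l-1$ are old nodes, each assigned a class; a component of class $i$ is a connected component of the subgraph induced by old nodes of class $i$. A long connector path for $\mathcal{C}$ is a path $(s,v,w,u)$ with $s\in\mathcal{C}$, $u$ in a component $\mathcal{C}'\neq\mathcal{C}$ of class $i$ with $\Psi(\mathcal{C})\cap\Psi(\mathcal{C}')=\emptyset$, $v$ a type-2 and $w$ a type-1 node of layer $l$, $v$ having no neighbor in any component of class $i$ other than $\mathcal{C}$ and $w$ having no neighbor in $\mathcal{C}$; its internal vertices are $v,w$, and paths are internally vertex-disjoint if their sets of internal vertices are pairwise disjoint. The helper graph $\mathcal{H}_i[\mathcal{C}]$: for each type-2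 node $v$ of layer $l$, a node $v_{\mathcal{C}}$ is added iff $\Psi(v)\notin\Psi(\mathcal{C})$, $v$ has a neighbor in $\mathcal{C}$, and $v$ has no neighbor in another component of class $i$; for each such $v_{\mathcal{C}}$ and each type-1 neighbor $w$ of $v$ on layer $l$ that has a neighbor in some component $\mathcal{C}'\neq\mathcal{C}$ of class $i$ but no neighbor in $\mathcal{C}$, a node $w_{\mathcal{C}}$ and the edge $\{v_{\mathcal{C}},w_{\mathcal{C}}\}$ are added. $\mathcal{H}_i$ is the disjoint union of the $\mathcal{H}_i[\mathcal{C}]$ over all components $\mathcal{C}$ of class $i$. *)

From mathcomp Require Import all_boot all_order all_algebra.
Set Implicit Arguments. Unset Strict Implicit. Unset Printing Implicit Defensive.
Import Order.TTheory GRing.Theory Num.Theory.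

(* Virtual nodes: [inl (v, j)] is the copy of v on lower layer j+1 (j < L);
   [inr (v, j, b)] is the copy of v on upper layer L+j+1, of type 2 if b = true,
   of type 1 if b = false. *)
Notation VT T L := ((T * 'I_L) + (T * 'I_L * bool))%type.

Definition separating (T : finType) (e : rel T) (S : {set T}) : bool :=
  (#|~: S| <= 1)%N ||
  ~~ [forall x in ~: S, forall y in ~: S,
        connect [rel a b | [&& e a b, a \notin S & b \notin S]] x y].

Definition vconn (T : finType) (e : rel T) : nat :=
  \big[minn/#|T|]_(S : {set T} | separating e S) #|S|.

Section Virtual.
Variables (T : finType) (e : rel T) (L : nat).

Definition psi (x : VT T L) : T :=
  match x with inl (v, _) => v | inr (v, _, _) => v end.

Definition vadj : rel (VT T L) :=
  fun x y => (x != y) && ((psi x == psi y) || e (psi x) (psi y)).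

Variables (t : nat) (cls : VT T L -> 'I_t) (i : 'I_t) (l : 'I_L).
(* the fixed upper layer is layer L + l + 1 *)

Definition old (x : VT T L) : bool :=
  match x with inl _ => true | inr (_, j, _) => (j < l)%N end.

Definition type1_at (x : VT T L) : bool :=
  match x with inr (_, j, b) => (j == l) && ~~ b | _ => false end.
Definition type2_at (x : VT T L) : bool :=
  match x with inr (_, j, b) => (j == l) && b | _ => false end.

Definition inS (x : VT T L) : bool := old x && (cls x == i).
Definition crel : rel (VT T L) := fun x y => [&& vadj x y, inS x & inS y].

Definition is_comp (C : {set VT T L}) : bool :=
  [exists x in C, inS x && (C == [set y | connect crel x y])].

Definition other_comp (C C' : {set VT T L}) : bool := is_comp C' && (C' != C).
Definition no_nbr_in (x : VT T L) (C : {set VT T L}) : bool :=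
  [forall y in C, ~~ vadj x y].
Definition has_nbr_in (x : VT T L) (C : {set VT T L}) : bool :=
  [exists y in C, vadj x y].

Definition long_connector (C : {set VT T L})
    (p : VT T L * VT T L * VT T L * VT T L) : bool :=
  let '(s, v, w, u) := p in
  [&& s \in C,
      [exists C' : {set VT T L},
         [&& other_comp C C', u \in C' & [disjoint psi @: C & psi @: C']]],
      type2_at v, type1_at w,
      [forall C' : {set VT T L}, other_comp C C' ==> no_nbr_in v C'],
      no_nbr_in w C,
      vadj s v, vadj v w & vadj w u].

Definition internals (p : VT T L * VT T L * VT T L * VT T L) : {set VT T L} :=
  [set p.1.1.2; p.1.2].

Definition int_disjoint (P : {set VT T L * VT T L * VT T L * VT T L}) : Prop :=
  forall p q, p \in P -> q \in P -> p != q -> [disjoint internals p & internals q].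

(* Helper graph H_i: a node x_C is encoded as the pair (x, C). *)
Definition v_node (C : {set VT T L}) (v : VT T L) : bool :=
  [&& type2_at v, psi v \notin psi @: C, has_nbr_in v C &
      [forall C' : {set VT T L}, other_comp C C' ==> no_nbr_in v C']].

Definition w_cond (C : {set VT T L}) (w : VT T L) : bool :=
  [&& type1_at w,
      [exists C' : {set VT T L}, other_comp C C' && has_nbr_in w C'] &
      no_nbr_in w C].

Definition hedge_dir (a b : VT T L * {set VT T L}) : bool :=
  [&& a.2 == b.2, is_comp a.2, v_node a.2 a.1, w_cond a.2 b.1 & vadj a.1 b.1].

Definition hedge (a b : VT T L * {set VT T L}) : bool :=
  hedge_dir a b || hedge_dir b a.

Definition matching (M : {set {set VT T L * {set VT T L}}}) : Prop :=
  (forall E, E \in M -> exists a b, hedge a b /\ E = [set a; b]) /\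
  (forall E1 E2, E1 \in M -> E2 \in M -> E1 != E2 -> [disjoint E1 & E2]).

Definition maximal_matching (M : {set {set VT T L * {set VT T L}}}) : Prop :=
  matching M /\ (forall M', matching M' -> M \subset M' -> M' = M).

End Virtual.

From mathcomp Require Import all_boot all_order all_algebra.
From mathcomp Require Import lra.
Import Order.TTheory GRing.Theory Num.Theory.

(** A long connector (s, v, w, u) for C yields the edge {v_C, w_C} of H_i[C],
  and internally disjoint connectors yield vertex-disjoint edges. By
  maximality, each of these edges meets an edge of M; that edge has an
  endpoint indexed by C, so it lies in H_i[C]. Distinct connectors meet M in
  distinct vertices, hence |P| is at most twice the number of matched edges
  of H_i[C]. Each matched edge of H_i[C] comes from a long connector, and
  matched edges are disjoint, so one connector per matched edge gives an
  internally disjoint family of the required size, with c' = c / 2. *)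

Set Implicit Arguments. Unset Strict Implicit. Unset Printing Implicit Defensive.

Section CoverCounting.
Variables (I U : finType).

Lemma card_cover_leq (S : {set {set U}}) n :
  {in S, forall E : {set U}, #|E| <= n} -> #|cover S| <= #|S| * n.
Proof.
move=> Sn; apply: leq_trans (leq_card_cover S).1 _.
by rewrite -sum_nat_const; apply: leq_sum.
Qed.

Lemma card_leq_disjoint_hitting (P : {set I}) (F : I -> {set U}) (A : {set U}) :
    {in P &, forall p q, p != q -> [disjoint F p & F q]} ->
    {in P, forall p, F p :&: A != set0} ->
  #|P| <= #|A|.
Proof.
move=> Fdisj hitA; pose h p := [pick x in F p :&: A].
have hA p : p \in P -> exists2 x, h p = Some x & x \in F p :&: A.
  move=> pP; rewrite /h; case: pickP => [x xFA | none]; first by exists x.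
  by case/set0Pn: (hitA p pP) => x; rewrite none.
have h_inj : {in P &, injective h}.
  move=> p q pP qP; have [x -> xFA] := hA p pP; have [y -> yFA] := hA q qP.
  move=> [exy]; apply/eqP; apply: contraTT (yFA) => npq.
  move: xFA; rewrite !inE exy => /andP[yFp _].
  by rewrite (disjointFr (Fdisj p q pP qP npq) yFp).
rewrite -(card_in_imset h_inj) -(card_imset A (@Some_inj _)).
apply/subset_leq_card/subsetP => _ /imsetP[p pP ->].
by have [x -> /setIP[_ xA]] := hA p pP; apply: imset_f.
Qed.

Lemma exists_section (f : I -> U) (Q : pred I) (S : {set U}) :
    {in S, forall y, exists2 p, Q p & f p = y} ->
  exists P : {set I},
    [/\ #|P| = #|S|, {in P &, injective f} & {in P, forall p, Q p /\ f p \in S}].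
Proof.
move=> Ssurj; pose g y := [pick p | Q p && (f p == y)].
have gS y : y \in S -> exists q, [/\ g y = Some q, Q q & f q = y].
  move=> yS; have [p Qp fp] := Ssurj y yS; rewrite /g.
  case: pickP => [q /andP[Qq /eqP fq] | none]; first by exists q.
  by move: (none p); rewrite Qp fp eqxx.
pose P := [set p | [&& Q p, f p \in S & g (f p) == Some p]].
have f_inj : {in P &, injective f}.
  move=> p q; rewrite !inE => /and3P[_ _ /eqP gp] /and3P[_ _ /eqP gq] fpq.
  by move: gp; rewrite fpq gq => -[].
exists P; split=> //; last by move=> p; rewrite inE => /and3P[].
rewrite -(card_in_imset f_inj); apply: eq_card => y.
apply/imsetP/idP => [[p] | yS]; first by rewrite inE => /and3P[_ fpS _] ->.
have [q [gq Qq fq]] := gS y yS.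
by exists q => //; rewrite inE Qq fq yS gq eqxx.
Qed.

End CoverCounting.

Section Connectors.
Variables (T : finType) (e : rel T) (L t : nat).
Variables (cls : VT T L -> 'I_t) (i : 'I_t) (l : 'I_L).
Hypothesis e_sym : symmetric e.

Local Notation vertex := (VT T L).
Local Notation path4 := (vertex * vertex * vertex * vertex)%type.
Local Notation comp := (is_comp e cls i l).
Local Notation lc := (long_connector e cls i l).

Lemma vadj_sym : symmetric (@vadj T e L).
Proof. by move=> x y; rewrite /vadj eq_sym (eq_sym (psi x)) e_sym. Qed.

Lemma crel_sym : symmetric (crel e cls i l).
Proof. by move=> x y; rewrite /crel vadj_sym (andbC (inS cls i l x)). Qed.

Lemma connect_crel_inS x z :
  inS cls i l x -> connect (crel e cls i l) x z -> inS cls i l z.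
Proof.
move=> Sx /connectP[p]; elim: p x Sx => [|y p IH] x Sx /=; first by move=> _ ->.
by case/andP=> /and3P[_ _ Sy]; apply: IH.
Qed.

Lemma comp_inS C x : comp C -> x \in C -> inS cls i l x.
Proof.
case/existsP=> y /and3P[_ Sy /eqP ->].
by rewrite inE; apply: connect_crel_inS.
Qed.

Lemma comp_psi_disjoint C C' :
  comp C -> comp C' -> C' != C -> [disjoint @psi T L @: C & @psi T L @: C'].
Proof.
move=> compC compC' neqC; have cs := sym_connect_sym crel_sym.
move: (compC) (compC') => /existsP[x /and3P[_ _ /eqP defC]].
move=> /existsP[x' /and3P[_ _ /eqP defC']].
rewrite -setI_eq0; apply: contraNT neqC => /set0Pn[r /setIP[]].
move=> /imsetP[z zC ->] /imsetP[z' z'C psi_zz'].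
have zz' : connect (crel e cls i l) z z'.
  have [-> | nzz'] := eqVneq z z'; first exact: connect0.
  apply: connect1; rewrite /crel (comp_inS compC zC) (comp_inS compC' z'C).
  by rewrite /vadj nzz' psi_zz' eqxx.
move: zC z'C; rewrite defC defC' !inE => xz x'z'.
have xx' : connect (crel e cls i l) x x'.
  by rewrite (connect_trans (connect_trans xz zz')) // cs.
apply/eqP/setP => y; rewrite !inE; apply/idP/idP; first exact: connect_trans.
by apply: connect_trans; rewrite cs.
Qed.

Lemma type1_at_old (w : vertex) : type1_at l w -> old l w = false.
Proof. by case: w => [[? ?] | [[? j] b]] //= /andP[/eqP -> _]; rewrite ltnn. Qed.

Definition conn_edge (C : {set vertex}) (p : path4) : {set vertex * {set vertex}} :=
  [set (p.1.1.2, C); (p.1.2, C)].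

Lemma mem_conn_edge C p x D :
  ((x, D) \in conn_edge C p) = (D == C) && (x \in internals p).
Proof. by rewrite !inE !xpair_eqE -andb_orl andbC. Qed.

Lemma disjoint_conn_edge C p q :
  [disjoint conn_edge C p & conn_edge C q] = [disjoint internals p & internals q].
Proof.
rewrite -!setI_eq0; apply/idP/idP; apply: contraLR => /set0Pn[y /setIP[yp yq]].
  by apply/set0Pn; exists (y, C); rewrite inE !mem_conn_edge eqxx yp yq.
case: y yp yq => x D; rewrite !mem_conn_edge => /andP[_ xp] /andP[_ xq].
by apply/set0Pn; exists x; rewrite inE xp xq.
Qed.

Lemma long_connector_hedge C p :
  comp C -> lc C p -> hedge_dir e cls i l (p.1.1.2, C) (p.1.2, C).
Proof.
case: p => [[[s v] w] u] compC /=.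
case/and5P=> sC exC t2v t1w /and5P[v_free w_free sv vw wu].
rewrite /hedge_dir /v_node /w_cond /= eqxx compC t2v t1w v_free w_free vw /=.
rewrite !andbT; apply/andP; split; first apply/andP; first split.
- apply/imsetP=> -[x xC psi_vx]; move/forallP/(_ x): w_free; rewrite xC /=.
  have nwx : w != x.
    by apply: contraTneq (comp_inS compC xC) => <-; rewrite /inS type1_at_old.
  move/negP; apply; rewrite /vadj nwx /=.
  move: vw; rewrite /vadj psi_vx => /andP[_ /orP[/eqP -> | exw]].
    by rewrite eqxx.
  by rewrite e_sym exw orbT.
- by apply/existsP; exists s; rewrite sC vadj_sym.
- case/existsP: exC => C' /and3P[otherC' uC' _].
  by apply/existsP; exists C'; rewrite otherC'; apply/existsP; exists u; rewrite uC'.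
Qed.

Lemma hedge_dir_long_connector C a b :
  hedge_dir e cls i l a b -> a.2 = C ->
  exists2 p, lc C p & conn_edge C p = [set a; b].
Proof.
case: a b => [v C0] [w C1] /and5P[/= /eqP <- compC].
case/and4P=> t2v _ /existsP[s /andP[sC vs]] v_free.
case/and3P=> t1w /existsP[C' /andP[otherC' /existsP[u /andP[uC' wu]]]] w_free.
move=> /= vw <-; exists (s, v, w, u) => //.
rewrite /= sC t2v t1w v_free w_free (vadj_sym s) vs vw wu !andbT.
apply/existsP; exists C'; rewrite otherC' uC' /=.
by case/andP: otherC' => compC' neqC; apply: comp_psi_disjoint.
Qed.

Lemma hedge_long_connector C a b :
  hedge e cls i l a b -> a.2 = C \/ b.2 = C ->
  exists2 p, lc C p & conn_edge C p = [set a; b].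
Proof.
have hedge_dir_snd x y : hedge_dir e cls i l x y -> x.2 = y.2 by case/and5P=> /eqP.
case/orP=> [ab | ba] abC.
  have aC : a.2 = C by case: abC => // <-; apply: hedge_dir_snd ab.
  exact: hedge_dir_long_connector ab aC.
have bC : b.2 = C by case: abC => // <-; rewrite (hedge_dir_snd _ _ ba).
have [p lcp edge_p] := hedge_dir_long_connector ba bC.
by exists p; rewrite // edge_p setUC.
Qed.

Variables (C : {set vertex}) (M : {set {set vertex * {set vertex}}}).
Hypotheses (compC : comp C) (maxM : maximal_matching e cls i l M).

Definition comp_edges := [set E in M | [exists x, (x, C) \in E]].

Lemma comp_edges_sub : comp_edges \subset M.
Proof. by apply/subsetP=> E; rewrite inE => /andP[]. Qed.

Lemma comp_edge_connector E :
  E \in comp_edges -> exists2 p, lc C p & conn_edge C p = E.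
Proof.
rewrite inE => /andP[EM /existsP[x xE]].
have [a [b [hab defE]]] := maxM.1.1 E EM; rewrite defE.
apply: hedge_long_connector hab _.
by move: xE; rewrite defE !inE => /orP[] /eqP <-; [left | right].
Qed.

Lemma conn_edge_meets_comp_edges p :
  lc C p -> conn_edge C p :&: cover comp_edges != set0.
Proof.
move=> lcp; apply/negP=> /eqP cover_free.
have disjM E : E \in M -> [disjoint conn_edge C p & E].
  move=> EM; rewrite -setI_eq0; apply/eqP/setP=> -[x D].
  rewrite in_set0 inE; apply/negbTE/andP=> -[xDp xDE].
  move: (xDp); rewrite mem_conn_edge => /andP[/eqP DC _]; subst D.
  suff : (x, C) \in conn_edge C p :&: cover comp_edges by rewrite cover_free inE.
  rewrite inE xDp; apply/bigcupP; exists E => //.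
  by rewrite inE EM; apply/existsP; exists x.
have [[Mform Mdisj] Mmax] := maxM.
have M'match : matching e cls i l (conn_edge C p |: M).
  split=> [E | E1 E2].
    case/setU1P=> [-> | /Mform //]; exists (p.1.1.2, C), (p.1.2, C).
    by rewrite /hedge long_connector_hedge.
  case/setU1P=> [-> | E1M]; case/setU1P=> [-> | E2M]; rewrite ?eqxx //.
  - by move=> _; apply: disjM.
  - by move=> _; rewrite disjoint_sym disjM.
  - exact: Mdisj.
have /disjM : conn_edge C p \in M by rewrite -(Mmax _ M'match (subsetUr _ _)) setU11.
by rewrite -setI_eq0 setIid => /eqP/setP/(_ (p.1.2, C)); rewrite !inE eqxx orbT.
Qed.

Lemma matched_long_connectors (P : {set path4}) :
    int_disjoint P -> {in P, forall p, lc C p} ->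
  exists P' : {set path4},
    [/\ #|P| <= 2 * #|P'|, int_disjoint P' &
        forall p, p \in P' -> lc C p /\ conn_edge C p \in M].
Proof.
move=> Pdisj Plc.
have [P' [cardP' edge_inj P'lc]] := exists_section comp_edge_connector.
have P'lcM p : p \in P' -> lc C p /\ conn_edge C p \in M.
  by case/P'lc=> lcp /(subsetP comp_edges_sub).
exists P'; split=> //.
- rewrite cardP' mulnC; apply: leq_trans (card_cover_leq (n := 2) _).
    apply: (card_leq_disjoint_hitting (F := conn_edge C)) => [p q pP qP npq | p /Plc].
      by rewrite disjoint_conn_edge Pdisj.
    exact: conn_edge_meets_comp_edges.
  move=> E /(subsetP comp_edges_sub) /maxM.1.1 [a [b [_ ->]]].
  by rewrite cards2 ltnS leq_b1.
- move=> p q pP' qP' npq; rewrite -(disjoint_conn_edge C).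
  apply: maxM.1.2; [exact: (P'lcM p pP').2 | exact: (P'lcM q qP').2 |].
  by apply: contraNneq npq => /edge_inj ->.
Qed.

End Connectors.

Local Open Scope ring_scope.

Theorem lemma8 :
  forall c : rat, 0 < c ->
  exists c' : rat, 0 < c' /\
  forall (T : finType) (e : rel T), symmetric e -> irreflexive e ->
  forall (L t : nat) (cls : VT T L -> 'I_t) (i : 'I_t) (l : 'I_L)
         (C : {set VT T L}),
    is_comp e cls i l C ->
    (exists P : {set VT T L * VT T L * VT T L * VT T L},
        [/\ c * (vconn e)%:R <= (#|P|)%:R, int_disjoint P &
            forall p, p \in P -> long_connector e cls i l C p]) ->
    forall M : {set {set VT T L * {set VT T L}}},
      maximal_matching e cls i l M ->
      exists P : {set VT T L * VT T L * VT T L * VT T L},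
        [/\ c' * (vconn e)%:R <= (#|P|)%:R, int_disjoint P &
            forall p, p \in P ->
              long_connector e cls i l C p /\
              [set (p.1.1.2, C); (p.1.2, C)] \in M].
Proof.
move=> c c_gt0; exists (c / 2%:R); split; first by rewrite divr_gt0.
move=> T e e_sym _ L t cls i l C compC [P [cardP Pdisj Plc]] M maxM.
have [P' [cardPP' P'disj P'lc]] := matched_long_connectors e_sym compC maxM Pdisj Plc.
exists P'; split=> //.
have : (#|P|%:R : rat) <= 2%:R * #|P'|%:R by rewrite -natrM ler_nat.
move: cardP; set k := (vconn e)%:R; set a := #|P|%:R; set b := #|P'|%:R.
lra.
Qed.
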